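(* Let $R$ be a commutative ring and $\mathfrak{a}\subseteq R$ an ideal. If $\Gamma_\mathfrak{a}$ commutes with inductive limits (all small colimits), then $\Gamma_\mathfrak{a}$ is a radical and $R=\Gamma_\mathfrak{a}(R)+\mathfrak{a}$.
   Context: $\Gamma_\mathfrak{a}(M)=\{x\in M\mid \exists n\in\mathbb{N}:\mathfrak{a}^n\subseteq(0:_Rx)\}$. A radical is a subfunctor $F$ of the identity functor on $R$-modules with $F(M/F(M))=0$ for every $R$-module $M$. *)

From HB Require Import structures.
From mathcomp Require Import all_boot all_order all_algebra.
From Stdlib Require Import ClassicalEpsilon.
Set Implicit Arguments. Unset Strict Implicit. Unset Printing Implicit Defensive.
Import Order.TTheory GRing.Theory Num.Theory.
Local Open Scope ring_scope.

Definition is_ideal (R : comPzRingType) (a : R -> Prop) : Prop :=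
  [/\ a 0, (forall x y, a x -> a y -> a (x + y)) & (forall r x, a x -> a (r * x))].

(* Membership in the power ideal a^n: a^0 = R, and a^(n+1) = a * a^n is the
   ideal product, i.e. the set of finite sums of products x*y, x in a, y in a^n. *)
Inductive ipow (R : comPzRingType) (a : R -> Prop) : nat -> R -> Prop :=
  | ipow0 : forall r, ipow a 0 r
  | ipowM : forall n x y, a x -> ipow a n y -> ipow a n.+1 (x * y)
  | ipowZ : forall n, ipow a n.+1 0
  | ipowD : forall n u v, ipow a n.+1 u -> ipow a n.+1 v -> ipow a n.+1 (u + v).

Lemma ipow_mull (R : comPzRingType) (a : R -> Prop) n r y :
  ipow a n y -> ipow a n (r * y).
Proof.
elim=> {n y} [s|n x y ax _ IH|n|n u v _ IHu _ IHv].
- exact: ipow0.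
- by rewrite mulrCA; apply: ipowM.
- by rewrite mulr0; apply: ipowZ.
- by rewrite mulrDr; apply: ipowD.
Qed.

Lemma ipowS_sub (R : comPzRingType) (a : R -> Prop) n r :
  ipow a n.+1 r -> ipow a n r.
Proof.
move Em : n.+1 => m H; elim: H n Em => //.
- move=> k x y ax Hy _ n [Ek]; subst.
  exact: ipow_mull.
- move=> k n [Ek]; subst.
  by case: (k) => [|j]; [apply: ipow0|apply: ipowZ].
- move=> k u v _ IHu _ IHv n [Ek]; subst.
  case: k IHu IHv => [|j] IHu IHv; first exact: ipow0.
  by apply: ipowD; [apply: IHu|apply: IHv].
Qed.

Lemma ipow_le (R : comPzRingType) (a : R -> Prop) m n r :
  (m <= n)%N -> ipow a n r -> ipow a m r.
Proof.
move=> le; elim: n le r => [|n IH] le r H.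
  by move: le; rewrite leqn0 => /eqP ->.
move: le; rewrite leq_eqVlt => /orP[/eqP -> //|lt].
by apply: IH => //; apply: ipowS_sub.
Qed.

Section Gamma.
Variables (R : comPzRingType) (a : R -> Prop).

Definition gam_prop (M : lmodType R) (x : M) : Prop :=
  exists n : nat, forall r, ipow a n r -> r *: x = 0.

Definition gam (M : lmodType R) : {pred M} :=
  fun x => if excluded_middle_informative (gam_prop x) then true else false.
Arguments gam M : clear implicits.

Lemma gamP (M : lmodType R) (x : M) : reflect (gam_prop x) (x \in gam M).
Proof.
rewrite /in_mem /= /gam; case: excluded_middle_informative => H.
- by apply: ReflectT.
- by apply: ReflectF.
Qed.

Lemma gam_submod_closed (M : lmodType R) : submod_closed (gam M).
Proof.
split; first by apply/gamP; exists 0%N => r _; rewrite scaler0.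
move=> c u v /gamP[n Hn] /gamP[m Hm]; apply/gamP; exists (maxn n m) => r Hr.
rewrite scalerDr scalerA mulrC -scalerA Hn ?Hm ?scaler0 ?addr0 //.
- by apply: ipow_le Hr; rewrite leq_maxr.
- by apply: ipow_le Hr; rewrite leq_maxl.
Qed.

Record gamT (M : lmodType R) := GamT { gval : M; gvalP : gval \in gam M }.

Section GamTInst.
Variable M : lmodType R.
HB.instance Definition _ := [isSub for @gval M].
HB.instance Definition _ := [Choice of gamT M by <:].
HB.instance Definition _ := GRing.SubChoice_isSubLmodule.Build R M (gam M) (gamT M)
  (GRing.submod_closed_semi (gam_submod_closed M)).
End GamTInst.

Lemma gam_map_in (M N : lmodType R) (f : M -> N) (hf : linear f) (x : M) :
  x \in gam M -> f x \in gam N.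
Proof.
have f0 : f 0 = 0.
  by have := hf (-1) 0 0; rewrite scaler0 add0r scaleN1r addNr.
move=> /gamP[n Hn]; apply/gamP; exists n => r Hr.
by move: (hf r x 0); rewrite addr0 f0 addr0 Hn // f0 => <-.
Qed.

Definition gam_map (M N : lmodType R) (f : M -> N) (hf : linear f)
  (x : gamT M) : gamT N := GamT (gam_map_in hf (gvalP x)).

End Gamma.
Arguments gam {R} a M.
Arguments gamT {R} a M.

Record category := Category {
  Ob : Type;
  Hom : Ob -> Ob -> Type;
  idm : forall i, Hom i i;
  comp : forall i j k, Hom j k -> Hom i j -> Hom i k;
  comp_id_l : forall i j (f : Hom i j), comp (idm j) f = f;
  comp_id_r : forall i j (f : Hom i j), comp f (idm i) = f;
  comp_assoc : forall i j k l (f : Hom i j) (g : Hom j k) (h : Hom k l),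
      comp h (comp g f) = comp (comp h g) f
}.

Section Diagrams.
Variable R : comPzRingType.

Record diagram (C : category) := Diagram {
  dob : Ob C -> lmodType R;
  dmap : forall i j, Hom i j -> dob i -> dob j;
  dmap_lin : forall i j (f : Hom i j), linear (dmap f);
  dmap_id : forall i x, dmap (idm i) x = x;
  dmap_comp : forall i j k (f : @Hom C i j) (g : @Hom C j k) x,
      dmap (comp g f) x = dmap g (dmap f x)
}.

Definition is_cocone (C : category) (F : Ob C -> lmodType R)
    (Fm : forall i j, @Hom C i j -> F i -> F j)
    (L : lmodType R) (c : forall i, F i -> L) : Prop :=
  (forall i, linear (c i)) /\
  (forall i j (f : @Hom C i j) x, c j (Fm i j f x) = c i x).

Definition is_colimit (C : category) (F : Ob C -> lmodType R)
    (Fm : forall i j, @Hom C i j -> F i -> F j)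
    (L : lmodType R) (c : forall i, F i -> L) : Prop :=
  is_cocone Fm c /\
  forall (N : lmodType R) (k : forall i, F i -> N), is_cocone Fm k ->
    exists u : L -> N,
      (linear u /\ forall i x, u (c i x) = k i x) /\
      forall u' : L -> N, linear u' -> (forall i x, u' (c i x) = k i x) ->
        forall y, u' y = u y.

End Diagrams.

Definition gam_commutes_colimits (R : comPzRingType) (a : R -> Prop) : Prop :=
  forall (C : category) (D : diagram R C) (L : lmodType R)
         (c : forall i, dob D i -> L) (hc : forall i, linear (c i)),
    is_colimit (@dmap R C D) c ->
    is_colimit (fun i j (f : @Hom C i j) => gam_map (a := a) (@dmap_lin R C D i j f))
               (fun i => gam_map (a := a) (hc i)).

(* Gamma_a is a radical: a subfunctor of the identity functor on R-modules
   (Gamma_a(M) is a submodule of M and linear maps send Gamma_a(M) into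
   Gamma_a(N)) with Gamma_a(M / Gamma_a(M)) = 0 for every R-module M.
   The last condition is written out on representatives: the class of x in
   M/Gamma_a(M) lies in Gamma_a(M/Gamma_a(M)), i.e. a^n x \subseteq Gamma_a(M)
   for some n, only if that class is zero, i.e. x \in Gamma_a(M). *)
Definition gam_is_radical (R : comPzRingType) (a : R -> Prop) : Prop :=
  (forall M : lmodType R, submod_closed (gam a M)) /\
  (forall (M N : lmodType R) (f : M -> N), linear f ->
     forall x, x \in gam a M -> f x \in gam a N) /\
  (forall (M : lmodType R) (x : M),
     (exists n : nat, forall r, ipow a n r -> r *: x \in gam a M) ->
     x \in gam a M).

(* The quotient M/P of a module by a submodule P is the colimit of the diagram
   with two objects R and M whose arrows R -> M are r |-> r p (p in P) and 0.
   As Gamma_a preserves this colimit, Gamma_a(M/P) is spanned by the image of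
   Gamma_a(M): every a-torsion class of M/P lifts to an a-torsion element of M.
   For P = Gamma_a(M) the lift shows that the class was already zero, so
   Gamma_a is a radical; for M = R and P = a every class of R/a is killed by a,
   hence lifts to Gamma_a(R), which gives R = Gamma_a(R) + a. *)

From Pilot Require Import Defs.
From HB Require Import structures.
From mathcomp Require Import all_boot all_order all_algebra.
From Stdlib Require Import ClassicalEpsilon.
Import GRing.Theory.
Local Open Scope ring_scope.
Local Open Scope quotient_scope.
Set Implicit Arguments. Unset Strict Implicit.

Definition classic_pred (T : Type) (A : T -> Prop) : {pred T} :=
  fun x => if excluded_middle_informative (A x) then true else false.

Lemma classic_predP (T : Type) (A : T -> Prop) x :
  reflect (A x) (x \in classic_pred A).
Proof.
by rewrite unfold_in /classic_pred; case: excluded_middle_informative; constructor.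
Qed.

Section LinearFun.
Variables (R : comPzRingType) (U W : lmodType R) (f : U -> W).
Hypothesis f_lin : linear f.

Lemma linear_fun0 : f 0 = 0.
Proof. by have := f_lin (-1) 0 0; rewrite scaler0 add0r scaleN1r addNr. Qed.

Lemma linear_funB x y : f (x - y) = f x - f y.
Proof. by rewrite -scaleN1r addrC f_lin scaleN1r addrC. Qed.

End LinearFun.

Section QuotientModule.
Variables (R : comPzRingType) (V : lmodType R) (P : {pred V}).
Hypothesis submodP : submod_closed P.

Definition submod_key : {pred V} := P.
HB.instance Definition _ := GRing.isSubmodClosed.Build R V submod_key submodP.

Definition quotmod := Quotient.quot (GRing.ZmodClosed.clone V submod_key _).
Definition qpi : V -> quotmod := \pi_quotmod.

Lemma qpi_eq x y : qpi x = qpi y <-> x - y \in P.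
Proof.
have := @Quotient.idealrBE V (GRing.ZmodClosed.clone V submod_key _) x y.
by rewrite /qpi /quotmod => ->; split=> [->|/eqP].
Qed.

Lemma qpiD x y : qpi (x + y) = qpi x + qpi y.
Proof. exact: Quotient.pi_add. Qed.

Lemma qpi0 : qpi 0 = 0.
Proof. exact: (raddf0 (\pi_quotmod : V -> quotmod)). Qed.

Lemma qpi_eq0 x : qpi x = 0 <-> x \in P.
Proof. by rewrite -qpi0 qpi_eq subr0. Qed.

Lemma qpiK q : qpi (repr q) = q.
Proof. exact: reprK. Qed.

Definition qscale (r : R) (q : quotmod) : quotmod := qpi (r *: repr q).

Lemma qpi_qscale r x : qpi (r *: x) = qscale r (qpi x).
Proof.
apply/qpi_eq; rewrite -scalerBr.
by apply: (@rpredZ _ _ submod_key); apply/qpi_eq; rewrite qpiK.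
Qed.

Lemma qscaleA r s q : qscale r (qscale s q) = qscale (r * s) q.
Proof. by rewrite -[q]qpiK -!qpi_qscale scalerA. Qed.

Lemma qscale1 : left_id 1 qscale.
Proof. by move=> q; rewrite -[q]qpiK -qpi_qscale scale1r. Qed.

Lemma qscaleDr : right_distributive qscale +%R.
Proof. by move=> r p q; rewrite -[p]qpiK -[q]qpiK -qpiD -!qpi_qscale scalerDr qpiD. Qed.

Lemma qscaleDl q : {morph qscale^~ q : r s / r + s}.
Proof. by move=> r s; rewrite -[q]qpiK -!qpi_qscale scalerDl qpiD. Qed.

HB.instance Definition _ := GRing.Zmodule.on quotmod.
HB.instance Definition _ :=
  GRing.Zmodule_isLmodule.Build R quotmod qscaleA qscale1 qscaleDr qscaleDl.

Lemma qpiZ r x : qpi (r *: x) = r *: qpi x.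
Proof. exact: qpi_qscale. Qed.

Lemma qpi_linear : linear qpi.
Proof. by move=> r x y; rewrite qpiD qpiZ. Qed.

End QuotientModule.

Lemma colimit_span (R : comPzRingType) (C : category) (F : Ob C -> lmodType R)
    (Fm : forall i j, @Defs.Hom C i j -> F i -> F j) (L : lmodType R)
    (c : forall i, F i -> L) (S : {pred L}) :
  is_colimit Fm c -> submod_closed S -> (forall i x, c i x \in S) ->
  forall y, y \in S.
Proof.
move=> [_ univ] submodS cS y.
pose zero i (_ : F i) : quotmod submodS := 0.
have zero_lin i : linear (zero i) by move=> r x z; rewrite /zero scaler0 addr0.
have [u [_ u_uniq]] := univ _ zero (conj zero_lin (fun _ _ _ _ => erefl)).
have qpi_factor i x : qpi submodS (c i x) = zero i x by apply/qpi_eq0.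
have const0_lin : linear (fun _ : L => 0 : quotmod submodS).
  by move=> r x z; rewrite scaler0 addr0.
apply/qpi_eq0.
rewrite (u_uniq _ (qpi_linear submodS) qpi_factor).
by rewrite -(u_uniq _ const0_lin (fun _ _ => erefl)).
Qed.

Section CoequalizerShape.
Variable J : Type.

(* Objects are [false] (source) and [true] (target); [None] is every identity
   and also the extra arrow [false -> true], [Some t] the arrows indexed by J. *)
Definition coeq_arrow (i j : bool) (f : option J) : bool :=
  if i then j && ~~ isSome f else j || ~~ isSome f.

Definition coeq_hom (i j : bool) := {f : option J | coeq_arrow i j f}.

Definition coeq_id (i : bool) : coeq_hom i i :=
  exist (coeq_arrow i i) None ltac:(by case: i).

Lemma coeq_comp_subproof i j k (h : coeq_hom j k) (e : coeq_hom i j) :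
  coeq_arrow i k (if isSome (sval h) then sval h else sval e).
Proof. by case: h e => [[x|] hh] [[y|] he]; case: i j k hh he => [] [] []. Qed.

Definition coeq_comp i j k (h : coeq_hom j k) (e : coeq_hom i j) : coeq_hom i k :=
  exist (coeq_arrow i k) _ (coeq_comp_subproof h e).

Lemma coeq_comp_id_l i j (f : coeq_hom i j) : coeq_comp (coeq_id j) f = f.
Proof. exact: val_inj. Qed.

Lemma coeq_comp_id_r i j (f : coeq_hom i j) : coeq_comp f (coeq_id i) = f.
Proof. by apply: val_inj => /=; case: (sval f). Qed.

Lemma coeq_comp_assoc i j k l
    (f : coeq_hom i j) (g : coeq_hom j k) (h : coeq_hom k l) :
  coeq_comp h (coeq_comp g f) = coeq_comp (coeq_comp h g) f.
Proof. by apply: val_inj => /=; case: (sval h) => //; case: (sval g). Qed.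

Definition coeq_par (t : J) : coeq_hom false true :=
  exist (coeq_arrow false true) (Some t) isT.

Definition coeq_zero : coeq_hom false true :=
  exist (coeq_arrow false true) None isT.

Definition coeq_cat : category :=
  Category coeq_comp_id_l coeq_comp_id_r coeq_comp_assoc.

End CoequalizerShape.

Section QuotientPresentation.
Variables (R : comPzRingType) (M : lmodType R) (P : {pred M}).
Hypothesis submodP : submod_closed P.

Let J := {p : M | p \in P}.

Definition pres_ob (i : bool) : lmodType R := if i then M else R^o.

Definition pres_map (i j : bool) : coeq_hom J i j -> pres_ob i -> pres_ob j :=
  match i, j with
  | false, false => fun _ r => r
  | false, true => fun f r => if sval f is Some p then r *: sval p else 0
  | true, true => fun _ x => x
  | true, false => fun _ _ => 0
  end.

Lemma pres_map_linear i j (f : coeq_hom J i j) : linear (pres_map f).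
Proof.
case: i j f => [] [] f r x y //=; rewrite ?scaler0 ?addr0 //.
by case: (sval f) => [p|]; rewrite ?scaler0 ?addr0 // scalerDl scalerA.
Qed.

Lemma pres_map_id i x : pres_map (coeq_id J i) x = x.
Proof. by case: i x. Qed.

Lemma pres_map_comp i j k (f : coeq_hom J i j) (g : coeq_hom J j k) x :
  pres_map (coeq_comp g f) x = pres_map g (pres_map f x).
Proof.
case: f g => [f hf] [g hg].
by case: i j k hf hg x => [] [] []; case: f => [?|]; case: g => [?|] //= _ _ x;
  rewrite ?scaler0 ?linear_fun0 //; apply: pres_map_linear.
Qed.

Definition pres_diagram : diagram R (coeq_cat J) :=
  @Diagram R (coeq_cat J) pres_ob pres_map pres_map_linear pres_map_id pres_map_comp.

Definition pres_cocone : forall i, pres_ob i -> quotmod submodP :=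
  fun i => if i is true then qpi submodP else fun _ => 0.
Arguments pres_cocone : clear implicits.

Lemma pres_cocone_linear i : linear (pres_cocone i).
Proof. by case: i => r x y /=; [apply: qpi_linear | rewrite scaler0 addr0]. Qed.

Lemma pres_cocone_colimit : is_colimit (@dmap R _ pres_diagram) pres_cocone.
Proof.
split.
  split=> [|i j [f hf] x]; first exact: pres_cocone_linear.
  case: i j hf x => [] [] //= _ x.
  case: f => [[p hp]|] /=; last exact: qpi0.
  by rewrite qpiZ (proj2 (qpi_eq0 _ _) hp) scaler0.
move=> N k [k_lin k_cocone].
have k_zero r : k false r = 0.
  by rewrite -(k_cocone _ _ (coeq_zero J) r); exact: (linear_fun0 (k_lin true)).
have k_P y : y \in P -> k true y = 0.
  move=> hy; have := k_cocone _ _ (coeq_par (exist _ y hy)) 1.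
  by rewrite /= scale1r k_zero.
have k_qpi x y : qpi submodP x = qpi submodP y -> k true x = k true y.
  move=> /qpi_eq /k_P; rewrite (linear_funB (k_lin true)) => /eqP.
  by rewrite subr_eq0 => /eqP.
exists (fun q => k true (repr q)); split.
  split=> [r q1 q2 | [] x] /=.
  - by rewrite -(k_lin true); apply: k_qpi; rewrite qpi_linear !qpiK.
  - by apply: k_qpi; rewrite qpiK.
  - by rewrite k_zero (k_qpi _ 0) ?qpiK ?qpi0 //; exact: (linear_fun0 (k_lin true)).
by move=> u' _ u'_fact q; rewrite -{1}(qpiK q) (u'_fact true).
Qed.

End QuotientPresentation.
Arguments pres_cocone {R M P} submodP i.
Arguments pres_cocone_linear {R M P} submodP i.

Lemma ipow1_ideal (R : comPzRingType) (a : R -> Prop) :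
  is_ideal a -> forall r, ipow a 1 r -> a r.
Proof.
move=> [a0 aD aM] r; move Eone : 1%N => n ar; elim: ar Eone => {n r}.
- by [].
- by move=> n x y ax _ _ _; rewrite mulrC; apply: aM.
- by move=> *; exact: a0.
- by move=> n u v _ au _ av E; apply: aD; [exact: au | exact: av].
Qed.

Section GammaCommutingWithColimits.
Variables (R : comPzRingType) (a : R -> Prop).
Hypothesis gam_colim : gam_commutes_colimits a.

Lemma gam_qpi_surj (M : lmodType R) (P : {pred M}) (submodP : submod_closed P)
    (q : quotmod submodP) :
  q \in gam a (quotmod submodP) -> exists2 m, m \in gam a M & qpi submodP m = q.
Proof.
move=> gam_q.
have gam_pres_colimit :=
  @gam_colim _ (pres_diagram P) _ _ (pres_cocone_linear submodP)
    (pres_cocone_colimit submodP).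
pose S := classic_pred (fun y : gamT a (quotmod submodP) =>
  exists m : gamT a M, gam_map (pres_cocone_linear submodP true) m = y).
have submodS : submod_closed S.
  split; first by apply/classic_predP; exists 0; apply: val_inj; exact: qpi0.
  move=> r _ _ /classic_predP[m1 <-] /classic_predP[m2 <-]; apply/classic_predP.
  by exists (r *: m1 + m2); apply: val_inj; exact: qpi_linear.
have S_images i x : gam_map (pres_cocone_linear submodP i) x \in S.
  apply/classic_predP; case: i x => x; first by exists x.
  by exists 0; apply: val_inj; exact: qpi0.
have /classic_predP[m qpi_m] :=
  colimit_span gam_pres_colimit submodS S_images (GamT gam_q).
by exists (gval m); [exact: gvalP | move/(congr1 (@gval _ _ _)): qpi_m].
Qed.

Lemma gam_torsion_closed (M : lmodType R) (x : M) :
  (exists n, forall r, ipow a n r -> r *: x \in gam a M) -> x \in gam a M.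
Proof.
move=> [n torsion_mod]; have submod_gam := gam_submod_closed a M.
have gam_qpi_x : qpi submod_gam x \in gam a (quotmod submod_gam).
  apply/gamP; exists n => r ar.
  by rewrite -qpiZ; apply/qpi_eq0; exact: torsion_mod.
have [m gam_m /qpi_eq gam_xm] := gam_qpi_surj gam_qpi_x.
have [_ gam_lin] := submod_gam.
by have := gam_lin (-1) _ _ gam_xm gam_m; rewrite scaleN1r opprB subrK.
Qed.

Lemma gam_is_radical_of_colimits : gam_is_radical a.
Proof.
split; first exact: gam_submod_closed.
by split; [exact: gam_map_in | exact: gam_torsion_closed].
Qed.

Lemma gam_add_ideal_decomposition : is_ideal a -> forall z : R,
  exists g t : R, g \in gam a R^o /\ a t /\ z = g + t.
Proof.
move=> ideal_a z; have [a0 aD aM] := ideal_a.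
have submod_a : submod_closed (classic_pred a : {pred R^o}).
  split; first exact/classic_predP.
  move=> r u v /classic_predP au /classic_predP av; apply/classic_predP.
  by apply: aD => //; apply: aM.
have gam_qpi_z : qpi submod_a z \in gam a (quotmod submod_a).
  apply/gamP; exists 1%N => r ar.
  rewrite -qpiZ; apply/qpi_eq0/classic_predP.
  by rewrite /GRing.scale /= mulrC; apply: aM; exact: ipow1_ideal.
have [g gam_g /qpi_eq /classic_predP a_gz] := gam_qpi_surj gam_qpi_z.
exists g, (z - g); split=> //; split; last by rewrite subrKC.
by rewrite -opprB -mulN1r; apply: aM.
Qed.

End GammaCommutingWithColimits.

Theorem proposition9p7 (R : comPzRingType) (a : R -> Prop) :
  is_ideal a ->
  gam_commutes_colimits a ->
  gam_is_radical a /\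
  (forall z : R, exists g t : R,
      g \in gam a R^o /\ a t /\ z = g + t).
Proof.
move=> ideal_a gam_colim.
by split; [exact: gam_is_radical_of_colimits | exact: gam_add_ideal_decomposition].
Qed.
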